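(* Let $X\subseteq\mathbb{R}^n$ be a nonempty closed convex set with $0\in X$, $\|\cdot\|$ the Euclidean norm, $D(x\|x')=\tfrac12\|x-x'\|^2$, and suppose $\max_{x,x'\in X}D(x\|x')\le F^2$. Let $\tau\in\mathbb{N}$ with $\tau\ge1$, $T\in\mathbb{N}$, and let $f_1,\dots,f_{T+\tau}:\mathbb{R}^n\to\mathbb{R}$ be convex differentiable functions with $\|\nabla f_t(x)\|\le L$ for all $x\in X$ and all $t$. Run delayed stochastic gradient descent: $x_1=\dots=x_{\tau+1}=0$, $g_t=\nabla f_t(x_t)$, and for $t=\tau+1,\dots,T+\tau$, $x_{t+1}=\operatorname{argmin}_{x\in X}\|x-(x_t-\eta_t g_{t-\tau})\|$, with $\eta_t=\sigma/\sqrt{t-\tau}$ for a constant $\sigma>0$. Let $x^*\in X$ be a minimizer over $X$ of the average risk $f^*(x)=\frac1T\sum_{t=1}^T f_t(x)$, and let $R[X]=\sum_{t=1}^T\big(f_t(x_t)-f_t(x^* )\big)$. Then $$R[X]\le \sigma L^2\sqrt T+F^2\frac{\sqrt T}{\sigma}+L^2\frac{\sigma\tau^2}{2}+2L^2\sigma\tau\sqrt T,$$ and consequently, for $\sigma^2=\frac{F^2}{2\tau L^2}$ and $T\ge\tau^2$, $$R[X]\le 4FL\sqrt{\tau T}.$$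
   Context: Delayed stochastic gradient descent updates the parameter with the gradient computed $\tau$ steps earlier, then projects onto $X$. ''Lipschitz continuous with constant $L$'' for the cost functions means the gradient bound $\|\nabla f_t(x)\|\le L$. *)

From HB Require Import structures.
From mathcomp Require Import all_boot all_order all_algebra.
From mathcomp Require Import reals.
Set Implicit Arguments. Unset Strict Implicit. Unset Printing Implicit Defensive.
Import Order.TTheory GRing.Theory Num.Theory.
Local Open Scope ring_scope.

Section Defs.
Variables (R : realType) (n : nat).
Notation vec := 'rV[R]_n.

Definition dotv (u v : vec) : R := \sum_(i < n) u ord0 i * v ord0 i.
Definition enorm (u : vec) : R := Num.sqrt (dotv u u).

Definition Dsq (x x' : vec) : R := 2^-1 * enorm (x - x') ^+ 2.

Definition convex_set (X : vec -> Prop) : Prop :=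
  forall x y (l : R), X x -> X y -> 0 <= l -> l <= 1 -> X (l *: x + (1 - l) *: y).

Definition closed_set (X : vec -> Prop) : Prop :=
  forall x, (forall eps : R, 0 < eps -> exists y, X y /\ enorm (y - x) < eps) -> X x.

Definition convex_fun (f : vec -> R) : Prop :=
  forall x y (l : R), 0 <= l -> l <= 1 ->
    f (l *: x + (1 - l) *: y) <= l * f x + (1 - l) * f y.

Definition is_gradient (f : vec -> R) (x g : vec) : Prop :=
  forall eps : R, 0 < eps -> exists delta : R, 0 < delta /\
    forall y, enorm (y - x) < delta ->
      `| f y - f x - dotv g (y - x) | <= eps * enorm (y - x).

Definition is_proj (X : vec -> Prop) (z p : vec) : Prop :=
  X p /\ forall y, X y -> enorm (p - z) <= enorm (y - z).

End Defs.

(* Convexity bounds the regret of round t by <g_t, x_t - xstar>, where g_t is the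
   gradient that is only applied at step t + tau.  Splitting
   x_t - xstar = (x_(t+tau) - xstar) + sum_(i < tau) (x_(t+i) - x_(t+i+1)),
   the first part is the usual projected-gradient term: it telescopes in
   |x_s - xstar|^2 and, after summation by parts against the increasing weights
   sqrt t / (2 sigma), costs F^2 sqrt T / sigma + sigma L^2 sqrt T.  Each of the
   tau staleness terms is at most L times the length eta L of one projected
   step, which adds 2 tau sigma L^2 sqrt T.  For the tuned sigma everything
   collapses to sigma L^2 (1 + 4 tau) sqrt T <= 4 F L sqrt (tau T). *)

From HB Require Import structures.
From mathcomp Require Import all_boot all_order all_algebra.
From mathcomp Require Import reals ring lra zify.
Import Order.TTheory GRing.Theory Num.Theory.
Set Implicit Arguments. Unset Strict Implicit. Unset Printing Implicit Defensive.
Local Open Scope ring_scope.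

Section RealFacts.
Variable R : realType.

Lemma le0_of_le_small_mul (A B : R) : 0 <= B ->
  (forall e : R, 0 < e -> e <= 1 -> A <= e * B) -> A <= 0.
Proof.
move=> B_ge0 small; rewrite leNgt; apply/negP => A_gt0.
have AB_gt0 : 0 < A + 2 * B by lra.
have := small (A / (A + 2 * B)).
rewrite divr_gt0 // ler_pdivrMr // mul1r mulrAC ler_pdivlMr // => /(_ isT).
have : 0 < A * A by rewrite mulr_gt0.
have : 0 <= A * B by rewrite mulr_ge0 // ltW.
nra.
Qed.

(* As [sqrt k ^ 2 - sqrt (k - 1) ^ 2 = 1], this is [(sqrt k - sqrt (k - 1)) ^ 2 >= 0]. *)
Lemma invsqrt_le_sqrt_diff (k : nat) :
  (Num.sqrt k%:R)^-1 <= 2 * (Num.sqrt k%:R - Num.sqrt k.-1%:R :> R).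
Proof.
case: k => [|k]; first by rewrite sqrtr0 invr0 subr0 mulr0.
rewrite /= -addn1 natrD.
set a := Num.sqrt (k%:R + 1 : R); set b := Num.sqrt (k%:R : R).
have a2 : a ^+ 2 = k%:R + 1 by rewrite sqr_sqrtr // addr_ge0.
have b2 : b ^+ 2 = k%:R by rewrite sqr_sqrtr.
have a_gt0 : 0 < a by rewrite sqrtr_gt0 ltr_pwDr.
rewrite -[a^-1]mul1r ler_pdivrMr //.
have := sqr_ge0 (a - b); nra.
Qed.

Lemma sum_invsqrt_subn (T k : nat) :
  \sum_(1 <= t < T.+1) (Num.sqrt (t - k)%:R)^-1 <= 2 * Num.sqrt T%:R :> R.
Proof.
pose s t := Num.sqrt (t.-1 - k)%:R : R.
apply: (@le_trans _ _ (\sum_(1 <= t < T.+1) 2 * (s t.+1 - s t))).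
  apply: ler_sum_nat => t /andP[t_ge1 _]; rewrite /s /=.
  have -> : (t.-1 - k = (t - k).-1)%N by lia.
  exact: invsqrt_le_sqrt_diff.
rewrite -mulr_sumr telescope_sumr // /s /= sub0n sqrtr0 subr0.
by rewrite ler_pM2l // ler_sqrt ?ler0n // ler_nat leq_subr.
Qed.

Lemma sum_diff_mul_le (b w : nat -> R) (M : R) (T : nat) :
  (forall t, (1 <= t <= T.+1)%N -> 0 <= b t <= M) ->
  (forall t, 0 <= w t) -> (forall t, w t <= w t.+1) ->
  \sum_(1 <= t < T.+1) (b t - b t.+1) * w t <= M * w T.
Proof.
move=> b_bnd w_ge0 w_incr.
suff : \sum_(1 <= t < T.+1) (b t - b t.+1) * w t <= (M - b T.+1) * w T.
  have /andP[bT_ge0 _] := b_bnd T.+1 (leqnn _).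
  by have := w_ge0 T; nra.
elim: T b_bnd => [|T IH] b_bnd.
  rewrite big_geq //; have /andP[_ b1_le] := b_bnd 1%N isT.
  by rewrite mulr_ge0 ?subr_ge0.
rewrite big_nat_recr //=.
have := IH (fun t t_bnd => b_bnd t ltac:(lia)).
have /andP[_ bT_le] := b_bnd T.+1 ltac:(lia).
have /andP[bT2_ge0 _] := b_bnd T.+2 ltac:(lia).
have := w_incr T; have := w_ge0 T; have := w_ge0 T.+1.
nra.
Qed.

Lemma tuned_rate_le (F L s tau q : R) :
  0 < s -> 0 < L -> 0 <= F -> 1 <= tau -> 0 <= q ->
  s ^+ 2 = F ^+ 2 / (2 * tau * L ^+ 2) ->
  s * L ^+ 2 * q + F ^+ 2 * (q / s) + 2 * L ^+ 2 * s * tau * q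
    <= 4 * F * L * (Num.sqrt tau * q).
Proof.
move=> s_gt0 L_gt0 F_ge0 tau_ge1 q_ge0 s_tuned.
have F2 : F ^+ 2 = 2 * tau * L ^+ 2 * s ^+ 2.
  by rewrite s_tuned; field; rewrite !gt_eqF //; lra.
have r2 : Num.sqrt tau ^+ 2 = tau by rewrite sqr_sqrtr //; lra.
have coef_le : s * L ^+ 2 * (1 + 4 * tau) <= 4 * F * L * Num.sqrt tau.
  have lhs_ge0 : 0 <= s * L ^+ 2 * (1 + 4 * tau).
    by rewrite !mulr_ge0 ?sqr_ge0 // ?ltW //; lra.
  have rhs_ge0 : 0 <= 4 * F * L * Num.sqrt tau by rewrite !mulr_ge0 ?sqrtr_ge0 // ltW.
  rewrite -(ler_pXn2r (_ : (0 < 2)%N)) ?nnegrE //.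
  have -> : (4 * F * L * Num.sqrt tau) ^+ 2 = 16 * F ^+ 2 * L ^+ 2 * Num.sqrt tau ^+ 2.
    by ring.
  rewrite F2 r2 -subr_ge0.
  (* with [tau >= 1] this is [16 tau^2 - 8 tau - 1 >= 0] *)
  have -> : 16 * (2 * tau * L ^+ 2 * s ^+ 2) * L ^+ 2 * tau
            - (s * L ^+ 2 * (1 + 4 * tau)) ^+ 2
          = (s * L ^+ 2) ^+ 2 * (16 * tau ^+ 2 - 8 * tau - 1) by ring.
  by rewrite mulr_ge0 ?sqr_ge0 //; nra.
have -> : s * L ^+ 2 * q + F ^+ 2 * (q / s) + 2 * L ^+ 2 * s * tau * q
          = s * L ^+ 2 * (1 + 4 * tau) * q.
  by rewrite F2; field; rewrite gt_eqF.
by rewrite [X in _ <= X]mulrA; apply: ler_wpM2r.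
Qed.

End RealFacts.

Section EuclideanSpace.
Variables (R : realType) (n : nat).
Implicit Types (u v w : 'rV[R]_n) (a : R).

Lemma dotvC u v : dotv u v = dotv v u.
Proof. by apply: eq_bigr => i _; rewrite mulrC. Qed.

Lemma dotvDl u v w : dotv (u + v) w = dotv u w + dotv v w.
Proof. by rewrite /dotv -big_split; apply: eq_bigr => i _; rewrite !mxE mulrDl. Qed.

Lemma dotvZl a u v : dotv (a *: u) v = a * dotv u v.
Proof. by rewrite /dotv mulr_sumr; apply: eq_bigr => i _; rewrite !mxE mulrA. Qed.

Lemma dotvDr u v w : dotv u (v + w) = dotv u v + dotv u w.
Proof. by rewrite dotvC dotvDl !(dotvC _ u). Qed.

Lemma dotvZr a u v : dotv u (a *: v) = a * dotv u v.
Proof. by rewrite dotvC dotvZl dotvC. Qed.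

Lemma dotvNl u v : dotv (- u) v = - dotv u v.
Proof. by rewrite -scaleN1r dotvZl mulN1r. Qed.

Lemma dotvNr u v : dotv u (- v) = - dotv u v.
Proof. by rewrite -scaleN1r dotvZr mulN1r. Qed.

Lemma dotvNN u : dotv (- u) (- u) = dotv u u.
Proof. by rewrite dotvNl dotvNr opprK. Qed.

Lemma dotv0r u : dotv u 0 = 0.
Proof. by rewrite -(scale0r 0) dotvZr mul0r. Qed.

Lemma dotvv_ge0 u : 0 <= dotv u u.
Proof. by apply: sumr_ge0 => i _; rewrite -expr2 sqr_ge0. Qed.

Lemma dotv_sqrD u v : dotv (u + v) (u + v) = dotv u u + 2 * dotv u v + dotv v v.
Proof. by rewrite dotvDl !dotvDr (dotvC v u); ring. Qed.

Lemma enorm_ge0 u : 0 <= enorm u.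
Proof. exact: sqrtr_ge0. Qed.

Lemma enorm_sqr u : enorm u ^+ 2 = dotv u u.
Proof. by rewrite sqr_sqrtr // dotvv_ge0. Qed.

Lemma enormZ a u : enorm (a *: u) = `|a| * enorm u.
Proof. by rewrite /enorm dotvZl dotvZr mulrA -expr2 sqrtrM ?sqr_ge0 // sqrtr_sqr. Qed.

Lemma dotvv_le_sqr u (L : R) : enorm u <= L -> dotv u u <= L ^+ 2.
Proof.
move=> uL; rewrite -enorm_sqr ler_pXn2r ?nnegrE ?sqrtr_ge0 //.
exact: le_trans (enorm_ge0 u) uL.
Qed.

Lemma dotv_le_young u v (c : R) : 2 * c * dotv u v <= c ^+ 2 * dotv u u + dotv v v.
Proof.
have := dotvv_ge0 (c *: u - v).
by rewrite dotv_sqrD dotvNr !dotvZl dotvZr dotvC -scaleN1r !dotvZl !dotvZr; lra.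
Qed.

Lemma dotv_le_of_sqr_le u v (c M : R) : 0 < c ->
  dotv u u <= M -> dotv v v <= c ^+ 2 * M -> dotv u v <= c * M.
Proof.
move=> c_gt0 uM vM; rewrite -(ler_pM2l (_ : 0 < 2 * c)) ?mulr_gt0 //.
have := dotv_le_young u v c.
have : c ^+ 2 * dotv u u <= c ^+ 2 * M by rewrite ler_wpM2l ?sqr_ge0.
lra.
Qed.

Lemma dotv_telescope (g z : 'rV[R]_n) (y : nat -> 'rV[R]_n) (k : nat) :
  dotv g (y 0%N - z) = dotv g (y k - z) + \sum_(i < k) dotv g (y i - y i.+1).
Proof.
elim: k => [|k IH]; first by rewrite big_ord0 addr0.
rewrite big_ord_recr /= IH addrA -[in RHS]addrAC -[in RHS]dotvDr.
congr (_ + _); congr dotv.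
by rewrite [RHS]addrC addrA subrK.
Qed.

End EuclideanSpace.

Section ConvexAnalysis.
Variables (R : realType) (n : nat).
Implicit Types (X : 'rV[R]_n -> Prop) (x y z g p : 'rV[R]_n).

(* Convexity bounds [f (x + l d) - f x] above by [l (f y - f x)], the gradient
   bounds it below by [l <g, d> - e l |d|]; let [e] go to [0]. *)
Lemma convex_gradient_le (f : 'rV[R]_n -> R) x y g :
  convex_fun f -> is_gradient f x g -> dotv g (y - x) <= f y - f x.
Proof.
move=> f_cvx f_grad; set d := y - x.
rewrite -subr_le0; apply: (le0_of_le_small_mul (enorm_ge0 d)) => e e_gt0 _.
have [delta [delta_gt0 f_lin]] := f_grad e e_gt0.
have dd_gt0 : 0 < enorm d + delta by have := enorm_ge0 d; lra.
pose l := delta / (2 * (enorm d + delta)).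
have l_gt0 : 0 < l by rewrite divr_gt0 // mulr_gt0.
have l_le1 : l <= 1 by rewrite ler_pdivrMr ?mulr_gt0 // mul1r; have := enorm_ge0 d; lra.
have ld_lt : l * enorm d < delta.
  rewrite /l mulrAC ltr_pdivrMr ?mulr_gt0 //; have := enorm_ge0 d; nra.
have w_x : l *: y + (1 - l) *: x - x = l *: d.
  by apply/rowP => j; rewrite !mxE; ring.
have := f_lin (l *: y + (1 - l) *: x).
rewrite w_x enormZ gtr0_norm // => /(_ ld_lt).
rewrite dotvZr => /ler_normlP[lin_lb _].
have cvx := f_cvx y x l (ltW l_gt0) l_le1.
rewrite -(ler_pM2l l_gt0); lra.
Qed.

Lemma proj_variational X z p y : convex_set X -> is_proj X z p -> X y ->
  0 <= dotv (p - z) (y - p).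
Proof.
move=> convX [Xp p_min] Xy.
rewrite -(ler_pM2l (ltr0n R 2)) mulr0 -oppr_le0.
apply: (le0_of_le_small_mul (dotvv_ge0 (y - p))) => l l_gt0 l_le1.
have := p_min _ (convX y p l Xy Xp (ltW l_gt0) l_le1).
have -> : l *: y + (1 - l) *: p - z = (p - z) + l *: (y - p).
  by apply/rowP => j; rewrite !mxE; ring.
rewrite /enorm ler_sqrt ?dotvv_ge0 // [X in _ <= X]dotv_sqrD dotvZl !dotvZr.
move=> min_le; rewrite -(ler_pM2l l_gt0); lra.
Qed.

Lemma proj_sqdist_le X z p y : convex_set X -> is_proj X z p -> X y ->
  dotv (p - y) (p - y) <= dotv (z - y) (z - y).
Proof.
move=> convX Pp Xy; have var := proj_variational convX Pp Xy.
rewrite (_ : z - y = (p - y) + - (p - z)); last by rewrite opprB [RHS]addrC addrA subrK.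
rewrite [X in _ <= X]dotv_sqrD dotvNN dotvNr.
have -> : dotv (p - y) (p - z) = - dotv (p - z) (y - p).
  by rewrite -[p - y]opprB dotvNl dotvC.
by have := dotvv_ge0 (p - z); lra.
Qed.

Lemma proj_step_descent X y z g p (eta : R) : convex_set X ->
  is_proj X (y - eta *: g) p -> X z ->
  2 * eta * dotv g (y - z) <=
    dotv (y - z) (y - z) - dotv (p - z) (p - z) + eta ^+ 2 * dotv g g.
Proof.
move=> convX Pp Xz; have dist_le := proj_sqdist_le convX Pp Xz.
rewrite addrAC -scaleNr [X in _ <= X]dotv_sqrD !dotvZl !dotvZr (dotvC _ g) in dist_le.
lra.
Qed.

Lemma proj_step_sqr_le X y g p (eta : R) : convex_set X ->
  is_proj X (y - eta *: g) p -> X y -> dotv (y - p) (y - p) <= eta ^+ 2 * dotv g g.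
Proof.
move=> convX Pp Xy; have := proj_sqdist_le convX Pp Xy.
rewrite addrAC subrr add0r dotvNN dotvZl dotvZr mulrA -expr2.
by rewrite -[y - p]opprB dotvNN.
Qed.

End ConvexAnalysis.

Definition step_size (R : realType) (sigma : R) (k : nat) : R :=
  sigma / Num.sqrt k%:R.

Section DelayedProjectedSGD.
Variables (R : realType) (n : nat) (X : 'rV[R]_n -> Prop) (F L sigma : R) (tau T : nat).
Variables (f : nat -> 'rV[R]_n -> R) (grad : nat -> 'rV[R]_n -> 'rV[R]_n).
Variables (x : nat -> 'rV[R]_n) (xstar : 'rV[R]_n).
Hypotheses (convX : convex_set X) (X0 : X 0) (Xxstar : X xstar) (sigma_gt0 : 0 < sigma).
Hypothesis diamX : forall y y', X y -> X y' -> Dsq y y' <= F ^+ 2.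
Hypothesis f_convex : forall t, (1 <= t <= T + tau)%N -> convex_fun (f t).
Hypothesis grad_f :
  forall t, (1 <= t <= T + tau)%N -> forall y, is_gradient (f t) y (grad t y).
Hypothesis grad_le :
  forall t, (1 <= t <= T + tau)%N -> forall y, X y -> enorm (grad t y) <= L.
Hypothesis x_init : forall t, (1 <= t <= tau.+1)%N -> x t = 0.
Hypothesis x_step : forall t, (tau.+1 <= t <= T + tau)%N ->
  is_proj X (x t - step_size sigma (t - tau) *: grad (t - tau)%N (x (t - tau)%N))
    (x t.+1).

Let g t := grad t (x t).
Let dist2 t := dotv (x t - xstar) (x t - xstar).

Lemma step_size_gt0 k : (0 < k)%N -> 0 < step_size sigma k.
Proof. by move=> k_gt0; rewrite divr_gt0 // sqrtr_gt0 ltr0n. Qed.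

Lemma iterate_in_X t : (1 <= t <= T + tau + 1)%N -> X (x t).
Proof.
move=> t_bnd; have [t_le | t_gt] := leqP t tau.+1; first by rewrite x_init //; lia.
case: t t_bnd t_gt => [|t] // t_bnd t_gt.
by case: (x_step (t := t) ltac:(lia)).
Qed.

Lemma grad_sqr_le t : (1 <= t <= T + tau)%N -> dotv (g t) (g t) <= L ^+ 2.
Proof.
move=> t_bnd; apply/dotvv_le_sqr/grad_le => //.
by apply: iterate_in_X; lia.
Qed.

Lemma dist2_le t : (1 <= t <= T + tau + 1)%N -> dist2 t <= 2 * F ^+ 2.
Proof.
move=> t_bnd; have := diamX (iterate_in_X t_bnd) Xxstar.
by rewrite /Dsq /dist2 enorm_sqr; lra.
Qed.

Lemma descent_term_le t : (1 <= t <= T)%N ->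
  dotv (g t) (x (t + tau)%N - xstar)
    <= (dist2 (t + tau) - dist2 (t + tau).+1) / (2 * step_size sigma t)
       + step_size sigma t * L ^+ 2 / 2.
Proof.
move=> t_bnd; have eta_gt0 := step_size_gt0 (k := t) ltac:(lia).
have descent := proj_step_descent convX (x_step (t := t + tau) ltac:(lia)) Xxstar.
rewrite addnK in descent.
have gL := grad_sqr_le (t := t) ltac:(lia).
set eta := step_size sigma t in eta_gt0 descent *.
have -> : forall A : R, A / (2 * eta) + eta * L ^+ 2 / 2 = (A + eta ^+ 2 * L ^+ 2) / (2 * eta).
  by move=> A; field; rewrite gt_eqF.
have two_eta_gt0 : 0 < 2 * eta by rewrite mulr_gt0.
rewrite ler_pdivlMr //.
have : eta ^+ 2 * dotv (g t) (g t) <= eta ^+ 2 * L ^+ 2 by rewrite ler_wpM2l ?sqr_ge0.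
rewrite /dist2 -/(g t) in descent *; lra.
Qed.

(* Before [tau + 1] the iterates sit at [0], and [step_size sigma 0] is [0]. *)
Lemma delay_term_le t j : (1 <= t <= T + tau)%N -> (1 <= j < T + tau)%N ->
  dotv (g t) (x j - x j.+1) <= step_size sigma (j - tau) * L ^+ 2.
Proof.
move=> t_bnd j_bnd; have [j_le | j_gt] := leqP j tau.
  rewrite !x_init ?subrr ?dotv0r; try lia.
  by rewrite (_ : j - tau = 0)%N ?/step_size ?sqrtr0 ?invr0 ?mulr0 ?mul0r //; lia.
have eta_gt0 := step_size_gt0 (k := j - tau) ltac:(lia).
have step_le := proj_step_sqr_le convX (x_step (t := j) ltac:(lia))
                                   (iterate_in_X (t := j) ltac:(lia)).
apply: (dotv_le_of_sqr_le eta_gt0 (grad_sqr_le t_bnd)).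
by apply: le_trans step_le _; rewrite ler_wpM2l ?sqr_ge0 // grad_sqr_le //; lia.
Qed.

Lemma round_regret_le t : (1 <= t <= T)%N ->
  f t (x t) - f t xstar
    <= (dist2 (t + tau) - dist2 (t + tau).+1) / (2 * step_size sigma t)
       + step_size sigma t * L ^+ 2 / 2
       + \sum_(i < tau) step_size sigma (t + i - tau) * L ^+ 2.
Proof.
move=> t_bnd.
have lin_le : f t (x t) - f t xstar <= dotv (g t) (x t - xstar).
  have := convex_gradient_le xstar (f_convex (t := t) ltac:(lia))
                                    (grad_f (t := t) ltac:(lia) (x t)).
  by rewrite -opprB dotvNr; lra.
apply: le_trans lin_le _.
have := dotv_telescope (g t) xstar (fun i => x (t + i)%N) tau; rewrite /= addn0 => ->.
apply: lerD; first exact: descent_term_le.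
apply: ler_sum => i _; rewrite addnS.
by apply: delay_term_le; have := ltn_ord i; lia.
Qed.

Lemma descent_sum_le :
  \sum_(1 <= t < T.+1) (dist2 (t + tau) - dist2 (t + tau).+1) / (2 * step_size sigma t)
    <= F ^+ 2 * (Num.sqrt T%:R / sigma).
Proof.
have weight t : (2 * step_size sigma t)^-1 = Num.sqrt t%:R / (2 * sigma).
  by rewrite /step_size invfM invf_div mulrCA -invfM.
under eq_bigr => t _ do rewrite weight.
apply: le_trans (sum_diff_mul_le (b := fun t => dist2 (t + tau)) (M := 2 * F ^+ 2) _ _ _) _.
- by move=> t t_bnd; rewrite dotvv_ge0 dist2_le //; lia.
- by move=> t; rewrite divr_ge0 ?sqrtr_ge0 ?mulr_ge0 // ltW.
- move=> t; apply: ler_wpM2r; first by rewrite invr_ge0 mulr_ge0 // ltW.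
  by rewrite ler_sqrt ?ler0n // ler_nat.
- by rewrite le_eqVlt; apply/orP; left; apply/eqP; field; rewrite gt_eqF.
Qed.

Lemma step_sum_le :
  \sum_(1 <= t < T.+1) step_size sigma t * L ^+ 2 / 2 <= sigma * L ^+ 2 * Num.sqrt T%:R.
Proof.
have term t : step_size sigma t * L ^+ 2 / 2
              = sigma * L ^+ 2 / 2 * (Num.sqrt (t - 0)%:R)^-1.
  by rewrite subn0 /step_size; ring.
under eq_bigr => t _ do rewrite term.
rewrite -mulr_sumr.
apply: le_trans (ler_wpM2l _ (sum_invsqrt_subn R T 0)) _.
  by rewrite divr_ge0 // mulr_ge0 ?sqr_ge0 // ltW.
lra.
Qed.

Lemma delay_sum_le :
  \sum_(1 <= t < T.+1) \sum_(i < tau) step_size sigma (t + i - tau) * L ^+ 2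
    <= 2 * L ^+ 2 * sigma * tau%:R * Num.sqrt T%:R.
Proof.
have inner i : (i < tau)%N ->
    \sum_(1 <= t < T.+1) step_size sigma (t + i - tau) * L ^+ 2
      <= sigma * L ^+ 2 * (2 * Num.sqrt T%:R).
  move=> i_lt; have c_ge0 : 0 <= sigma * L ^+ 2 by rewrite mulr_ge0 ?sqr_ge0 // ltW.
  apply: le_trans _ (ler_wpM2l c_ge0 (sum_invsqrt_subn R T (tau - i))).
  rewrite mulr_sumr; apply: ler_sum_nat => t _.
  rewrite (_ : t + i - tau = t - (tau - i))%N; last lia.
  by rewrite /step_size; lra.
rewrite exchange_big /=.
apply: le_trans (_ : _ <= \sum_(i < tau) sigma * L ^+ 2 * (2 * Num.sqrt T%:R)) _.
  by apply: ler_sum => i _; exact: inner.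
by rewrite sumr_const card_ord -mulr_natr; lra.
Qed.

Lemma regret_le :
  \sum_(1 <= t < T.+1) (f t (x t) - f t xstar)
    <= sigma * L ^+ 2 * Num.sqrt T%:R + F ^+ 2 * (Num.sqrt T%:R / sigma)
       + 2 * L ^+ 2 * sigma * tau%:R * Num.sqrt T%:R.
Proof.
apply: le_trans (ler_sum_nat _) _ => [t t_bnd|]; first exact: round_regret_le.
rewrite !big_split /=.
by have := descent_sum_le; have := step_sum_le; have := delay_sum_le; lra.
Qed.

End DelayedProjectedSGD.

Theorem theorem2 (R : realType) (n : nat) (X : 'rV[R]_n -> Prop)
  (F L sigma : R) (tau T : nat)
  (f : nat -> 'rV[R]_n -> R) (grad : nat -> 'rV[R]_n -> 'rV[R]_n)
  (x : nat -> 'rV[R]_n) (xstar : 'rV[R]_n) :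
  closed_set X -> convex_set X -> X 0 ->
  (forall y y', X y -> X y' -> Dsq y y' <= F ^+ 2) ->
  (1 <= tau)%N ->
  (forall t, (1 <= t <= T + tau)%N -> convex_fun (f t)) ->
  (forall t, (1 <= t <= T + tau)%N -> forall y, is_gradient (f t) y (grad t y)) ->
  (forall t, (1 <= t <= T + tau)%N -> forall y, X y -> enorm (grad t y) <= L) ->
  0 < sigma ->
  (forall t, (1 <= t <= tau.+1)%N -> x t = 0) ->
  (forall t, (tau.+1 <= t <= T + tau)%N ->
     is_proj X (x t - (sigma / Num.sqrt (t - tau)%:R) *: grad (t - tau)%N (x (t - tau)%N))
             (x t.+1)) ->
  X xstar ->
  (forall y, X y -> T%:R^-1 * (\sum_(1 <= t < T.+1) f t xstar)
                    <= T%:R^-1 * (\sum_(1 <= t < T.+1) f t y)) ->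
  let regret := \sum_(1 <= t < T.+1) (f t (x t) - f t xstar) in
  regret <= sigma * L ^+ 2 * Num.sqrt T%:R + F ^+ 2 * (Num.sqrt T%:R / sigma)
            + L ^+ 2 * (sigma * (tau ^ 2)%:R / 2) + 2 * L ^+ 2 * sigma * tau%:R * Num.sqrt T%:R
  /\ (0 <= F -> sigma ^+ 2 = F ^+ 2 / (2 * tau%:R * L ^+ 2) -> (tau ^ 2 <= T)%N ->
      regret <= 4 * F * L * Num.sqrt (tau%:R * T%:R)).
Proof.
move=> _ convX X0 diamX tau_ge1 f_cvx grad_f grad_le sigma_gt0 x_init x_step Xxstar _ regret.
have regret_bnd : regret <= _ :=
  regret_le convX X0 Xxstar sigma_gt0 diamX f_cvx grad_f grad_le x_init x_step.
split.
  apply: le_trans regret_bnd _.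
  have : 0 <= L ^+ 2 * (sigma * (tau ^ 2)%:R / 2).
    by rewrite mulr_ge0 ?sqr_ge0 // divr_ge0 // mulr_ge0 // ltW.
  lra.
move=> F_ge0 sigma_tuned _.
have L_ge0 : 0 <= L.
  exact: le_trans (enorm_ge0 _) (grad_le 1%N ltac:(lia) 0 X0).
have L_gt0 : 0 < L.
  rewrite lt_def L_ge0 andbT; apply/eqP => L0; move: sigma_tuned.
  by rewrite L0 expr0n mulr0 invr0 mulr0 => /eqP; rewrite sqrf_eq0 gt_eqF.
have tauR_ge1 : 1 <= tau%:R :> R by rewrite ler1n.
rewrite sqrtrM ?ler0n //.
have := tuned_rate_le sigma_gt0 L_gt0 F_ge0 tauR_ge1 (sqrtr_ge0 T%:R) sigma_tuned.
lra.
Qed.
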